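(* Let $(\mathbb S,+,\cdot)$ be an Essential S-Structure. Then $(\mathbb S_0,+,\cdot)$ (with the operations of $\mathbb S$ restricted to $\mathbb S_0$) forms a Commutative Ring with Unity $1$.
   Context: An S-Structure is a triple $(\mathbb S,+,\cdot)$ where $\mathbb S$ is a set and $+,\cdot$ are binary operations on $\mathbb S$ such that: $(\mathbb S,+)$ is a commutative group with identity $0$ (the inverse of $s$ is written $-s$, and $s-t:=s+(-t)$); $\mathbb S$ is closed under $\cdot$; and there exists $s\in\mathbb S$ with $0\cdot s\neq 0$ or $s\cdot 0\neq 0$. Multiplication binds tighter than addition. The structures considered come with a distinguished element of $\mathbb S$ denoted $1$. It is Commutative if $s\cdot t=t\cdot s$ for all $s,t$. For a Commutative S-Structure and $\alpha\in\mathbb S$, put $\mathbb S_\alpha=\{s\in\mathbb S:0\cdot s=s\cdot 0=\alpha\}$ and $\Lambda=\{\alpha\in\mathbb S:\mathbb S_\alpha\neq\emptyset\}$. Wheel Distributive: $s\cdot(t+r)+(s\cdot 0)=(s\cdot t)+(s\cdot r)$ for all $s,t,r\in\mathbb S$. S-Associative: for all $m,n\in\mathbb S_0$ and $s\in\mathbb S$, $m\cdot(n\cdot s)=(m\cdot n)\cdot s-([(m-1)\cdot(n-1)]\cdot(0\cdot s))$. Base: if $\mathbb S_0\neq\emptyset$ and $\alpha\in\Lambda$, $q\in\mathbb S_\alpha$ is a Base for $\mathbb S_\alpha$ if $q+\beta\in\mathbb S_\alpha$ for all $\beta\in\mathbb S_0$ and every $s\in\mathbb S_\alpha$ equals $q+\beta$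 for some $\beta\in\mathbb S_0$. Coordinated: $\mathbb S_0\neq\emptyset$ and every $\mathbb S_\alpha$ with $\alpha\in\Lambda$ has a Base. Standard Bases: a Coordinated Commutative S-Structure has Standard Bases if there is a specified element $q_0(1)\in\mathbb S_1$ which is a Base for $\mathbb S_1$, and for every $\alpha\in\Lambda$ the element $q_0(\alpha):=\alpha\cdot(q_0(1)+1)-1$ lies in $\mathbb S_\alpha$ and is a Base for $\mathbb S_\alpha$. An Essential S-Structure is an S-Structure that is Commutative, Wheel Distributive, S-Associative, has Standard Bases (in particular is Coordinated), satisfies $0,1\in\mathbb S_0$, and satisfies $\mathbb S_0=\{1\cdot x:x\in\mathbb S_0\}$. *)

From mathcomp Require Import all_boot all_algebra.
Set Implicit Arguments. Unset Strict Implicit. Unset Printing Implicit Defensive.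
Import GRing.Theory.
Local Open Scope ring_scope.

Section SStructure.
Variables (S : zmodType) (mul : S -> S -> S) (one : S).

(* S-Structure: (S,+) commutative group (zmodType), S closed under mul
   (by typing), and some s with 0*s <> 0 or s*0 <> 0. *)
Definition SStructure : Prop :=
  exists s : S, mul 0 s <> 0 \/ mul s 0 <> 0.

Definition Commutative : Prop := forall s t : S, mul s t = mul t s.

Definition S_ (alpha s : S) : Prop := mul 0 s = alpha /\ mul s 0 = alpha.

Definition Lambda (alpha : S) : Prop := exists s, S_ alpha s.

Definition WheelDistributive : Prop :=
  forall s t r : S, mul s (t + r) + mul s 0 = mul s t + mul s r.

Definition SAssociative : Prop :=
  forall m n s : S, S_ 0 m -> S_ 0 n ->
    mul m (mul n s) = mul (mul m n) s - mul (mul (m - one) (n - one)) (mul 0 s).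

Definition Base (alpha q : S) : Prop :=
  S_ alpha q /\
  (forall beta, S_ 0 beta -> S_ alpha (q + beta)) /\
  (forall s, S_ alpha s -> exists beta, S_ 0 beta /\ s = q + beta).

Definition Coordinated : Prop :=
  (exists x, S_ 0 x) /\ forall alpha, Lambda alpha -> exists q, Base alpha q.

Definition q0 (q01 alpha : S) : S := mul alpha (q01 + one) - one.

Definition StandardBases : Prop :=
  Coordinated /\
  exists q01 : S, S_ one q01 /\ Base one q01 /\
    forall alpha, Lambda alpha -> S_ alpha (q0 q01 alpha) /\ Base alpha (q0 q01 alpha).

Definition Essential : Prop :=
  SStructure /\ Commutative /\ WheelDistributive /\ SAssociative /\
  StandardBases /\ S_ 0 0 /\ S_ 0 one /\
  (forall x, S_ 0 x <-> exists y, S_ 0 y /\ x = mul one y).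

Definition ComRingWithUnityOn (P : S -> Prop) : Prop :=
  (P 0 /\ P one /\
      (forall x y, P x -> P y -> P (x + y)) /\
      (forall x, P x -> P (- x)) /\
      (forall x y, P x -> P y -> P (mul x y))) /\
      ((forall x y z, P x -> P y -> P z -> x + (y + z) = (x + y) + z) /\
      (forall x y, P x -> P y -> x + y = y + x) /\
      (forall x, P x -> x + 0 = x) /\
      (forall x, P x -> x + - x = 0)) /\
      (forall x y z, P x -> P y -> P z -> mul x (mul y z) = mul (mul x y) z) /\
      (forall x y, P x -> P y -> mul x y = mul y x) /\
      (forall x, P x -> mul one x = x /\ mul x one = x) /\
      (forall x y z, P x -> P y -> P z -> mul x (y + z) = mul x y + mul x z) /\
      (forall x y z, P x -> P y -> P z -> mul (x + y) z = mul x z + mul y z).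

End SStructure.

(* Commutativity reduces membership in S_0 to 0 * x = 0, and wheel
   distributivity makes multiplication by an element of S_0 additive, so S_0
   is an additive subgroup.  S-associativity with m = 0 shows that 0 * (x * y)
   is the same for every y in S_0, hence equals 0 * (x * 0) = 0; and on S_0 it
   collapses to plain associativity because its correction term
   ((x - 1) * (y - 1)) * (0 * z) is w * 0 with w in S_0.  Finally,
   S-associativity with n = 0 against an element q of S_1 (so 0 * q = 1)
   shows that m |-> m * 1 is idempotent on S_0; since every element of S_0
   has the form 1 * y, this makes 1 a unit on S_0. *)
From mathcomp Require Import all_boot all_algebra.
Import GRing.Theory.
Set Implicit Arguments. Unset Strict Implicit.
Local Open Scope ring_scope.

Section ZeroSlice.
Variables (S : zmodType) (mul : S -> S -> S) (one : S).
Hypothesis mulC : Commutative mul.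
Hypothesis wheel_distr : WheelDistributive mul.
Hypothesis sassoc : SAssociative mul one.
Hypothesis S0_0 : S_ mul 0 0.
Hypothesis S0_1 : S_ mul 0 one.

Local Notation S0 := (S_ mul 0).

Lemma S0P x : S0 x <-> mul 0 x = 0.
Proof. by split=> [[]|x0]; last by split; rewrite // mulC. Qed.

Lemma mul_S0D x y z : S0 x -> mul x (y + z) = mul x y + mul x z.
Proof. by case=> _ x0; rewrite -wheel_distr x0 addr0. Qed.

Lemma mul_S0N x y : S0 x -> mul x (- y) = - mul x y.
Proof.
move=> Sx; apply/eqP; rewrite -subr_eq0 opprK addrC -mul_S0D // subrr.
by case: Sx => _ ->.
Qed.

Lemma mul_S0B x y z : S0 x -> mul x (y - z) = mul x y - mul x z.
Proof. by move=> Sx; rewrite mul_S0D // mul_S0N. Qed.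

Lemma mul_S0Nl x z : S0 z -> mul (- x) z = - mul x z.
Proof. by move=> Sz; rewrite !(mulC _ z) mul_S0N. Qed.

Lemma mul_S0Bl x y z : S0 z -> mul (x - y) z = mul x z - mul y z.
Proof. by move=> Sz; rewrite !(mulC _ z) mul_S0B. Qed.

Lemma S0D x y : S0 x -> S0 y -> S0 (x + y).
Proof. by move=> Sx /S0P y0; apply/S0P; rewrite mul_S0D // Sx.1 y0 addr0. Qed.

Lemma S0N x : S0 x -> S0 (- x).
Proof. by move=> /S0P x0; apply/S0P; rewrite mul_S0N // x0 oppr0. Qed.

Lemma S0B x y : S0 x -> S0 y -> S0 (x - y).
Proof. by move=> Sx Sy; apply: S0D => //; apply: S0N. Qed.

Lemma S0M x y : S0 x -> S0 y -> S0 (mul x y).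
Proof.
move=> Sx /S0P y0; apply/S0P.
have corr0 : mul (mul (0 - one) (x - one)) 0 = 0.
  have := @sassoc 0 x 0 S0_0 Sx; rewrite Sx.2 Sx.1 S0_0.1.
  by move/eqP; rewrite eq_sym subr_eq add0r eq_sym => /eqP.
by rewrite sassoc // Sx.1 y0 corr0 subrr.
Qed.

Lemma mul_S0A x y z : S0 x -> S0 y -> S0 z -> mul x (mul y z) = mul (mul x y) z.
Proof.
move=> Sx Sy [z0 _]; rewrite sassoc // z0.
by rewrite (S0M (S0B Sx S0_1) (S0B Sy S0_1)).2 subr0.
Qed.

Section UnitElement.
Variable q : S.
Hypothesis q_one : mul 0 q = one.

Lemma mul_S0_one m : S0 m -> mul m one = one + mul (mul m one - mul one one) one.
Proof.
move=> Sm; have E := @sassoc m 0 q Sm S0_0; rewrite q_one Sm.2 q_one in E.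
by rewrite [LHS]E sub0r (mul_S0N _ (S0B Sm S0_1)) mul_S0Bl // mul_S0Nl // opprK.
Qed.

Lemma mul_one_idem m : S0 m -> mul (mul m one) one = mul m one.
Proof.
have one_one : mul (mul one one) one = one.
  have := mul_S0_one S0_0; rewrite S0_1.1 sub0r mul_S0Nl //.
  by move/eqP; rewrite eq_sym subr_eq0 eq_sym => /eqP.
by move=> Sm; rewrite [RHS]mul_S0_one // mul_S0Bl // one_one addrC subrK.
Qed.

Lemma mul1_mul1 y : S0 y -> mul one (mul one y) = mul one y.
Proof. by move=> Sy; rewrite !(mulC one) mul_one_idem. Qed.

End UnitElement.

Lemma zero_slice_comRing :
  (forall x, S0 x -> mul one x = x) -> ComRingWithUnityOn mul one S0.
Proof.
move=> mul1x.
split; first exact: (conj S0_0 (conj S0_1 (conj S0D (conj S0N S0M)))).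
split; first by do 3?split=> *; [exact: addrA | exact: addrC | exact: addr0 | exact: subrr].
split; first exact: mul_S0A.
split; first by move=> *; rewrite mulC.
split; first by move=> x Sx; rewrite (mulC x) mul1x.
split; first by move=> x y z Sx _ _; rewrite mul_S0D.
by move=> x y z _ _ Sz; rewrite !(mulC _ z) mul_S0D.
Qed.

End ZeroSlice.

Theorem theorem3p1p1 (S : zmodType) (mul : S -> S -> S) (one : S) :
  Essential mul one -> ComRingWithUnityOn mul one (S_ mul 0).
Proof.
move=> [_ [mulC [wd [sa [[_ [q [[q_one _] _]]] [S0_0 [S0_1 S0_mul1]]]]]]].
apply: zero_slice_comRing => // x /S0_mul1 [y [Sy ->]].
exact: (mul1_mul1 mulC wd sa S0_0 S0_1 q_one).
Qed.
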